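(* Consider the fully discrete scheme described in the context. Any solution of the scheme satisfies, for every $\Delta t>0$, the discrete energy law $$\frac{\tilde F^{n+1}-\tilde F^n}{\Delta t}=-\Delta x\Delta y\Big[\sum_{i=0}^{N_x}\sum_{j=1}^{N_y}\big(A_x(\psi\bar M^{n+\frac12})\,|D_x(\chi\mu_*^{n+\frac12})|^2\big)_{i+\frac12,j}+\sum_{i=1}^{N_x}\sum_{j=0}^{N_y}\big(A_y(\psi\bar M^{n+\frac12})\,|D_y(\chi\mu_*^{n+\frac12})|^2\big)_{i,j+\frac12}\Big]$$ $$-\Delta x\Delta y\sum_{i=1}^{N_x}\sum_{j=1}^{N_y}\tfrac12\Gamma^{-1}\Big\{|D_x\psi|_{i-\frac12,j}\big(A_x\tfrac{\tilde\phi^{n+1}-\tilde\phi^n}{\Delta t}\big)^2_{i-\frac12,j}+|D_x\psi|_{i+\frac12,j}\big(A_x\tfrac{\tilde\phi^{n+1}-\tilde\phi^n}{\Delta t}\big)^2_{i+\frac12,j}+|D_y\psi|_{i,j-\frac12}\big(A_y\tfrac{\tilde\phi^{n+1}-\tilde\phi^n}{\Delta t}\big)^2_{i,j-\frac12}+|D_y\psi|_{i,j+\frac12}\big(A_y\tfrac{\tilde\phi^{n+1}-\tilde\phi^n}{\Delta t}\big)^2_{i,j+\frac12}\Big\}$$ $$-\Delta x\Delta y\sum_{i=1}^{N_x}\sum_{j=1}^{N_y}\mu^{n+\frac12}_{*,i,j}\,\chi_{i,j}\,\mathcal B(h_3)_{i,j},$$ where the discrete energy is $$\tilde F^n=\Delta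 x\Delta y\sum_{i=1}^{N_x}\sum_{j=1}^{N_y}\Big\{\tfrac12\psi_{i,j}|q^n_{i,j}|^2+\tfrac12K\big[(A_x\psi)_{i+\frac12,j}(D_x\tilde\phi^n)^2_{i+\frac12,j}+(A_y\psi)_{i,j+\frac12}(D_y\tilde\phi^n)^2_{i,j+\frac12}\big]+\mathcal B\big(\tfrac12\alpha(\tilde\phi^n-h_1)^2\big)^{\sharp}_{i,j}\Big\},$$ with $\mathcal B(\cdot)^{\sharp}$ defined in the context. Therefore the scheme is unconditionally energy stable: in particular, when $h_3\equiv0$, $\tilde F^{n+1}\le\tilde F^n$ for every $\Delta t>0$.
   Context: Domain and grid: $\Omega=[-\tfrac12L_x,\tfrac12L_x]\times[-\tfrac12L_y,\tfrac12L_y]$ is divided into $N_x\times N_y$ uniform cells with $\Delta x=L_x/N_x$, $\Delta y=L_y/N_y$; grid functions $u_{i,j}$ live at cell centers $i=1,\dots,N_x$, $j=1,\dots,N_y$, with ghost indices $i=0,N_x+1$, $j=0,N_y+1$. For a cell-centered $u$ define face quantities $(A_xu)_{i+\frac12,j}=\tfrac12(u_{i+1,j}+u_{i,j})$, $(D_xu)_{i+\frac12,j}=(u_{i+1,j}-u_{i,j})/\Delta x$ ($i=0,\dots,N_x$), and analogously $(A_yu)_{i,j+\frac12}$, $(D_yu)_{i,j+\frac12}$; for a face function $w$, $(D_xw)_{i,j}=(w_{i+\frac12,j}-w_{i-\frac12,j})/\Delta x$, $(D_yw)_{i,j}=(w_{i,j+\frac12}-w_{i,j-\frac12})/\Delta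 y$. Set $D_h(a,u)_{i,j}=D_x(A_xa\,D_xu)_{i,j}+D_y(A_ya\,D_yu)_{i,j}$. Given data: a grid function $\psi>0$ (discrete approximation of the characteristic function of the original domain $\Omega_1\subset\Omega$) with $\chi=1/\psi$; constants $K>0$, $\alpha\ge0$, $\Gamma>0$, $\Delta t>0$; a positive mobility grid function $\bar M^{n+\frac12}$; time-independent grid functions $h_1,h_2,h_3$; $g(\phi)=f'(\phi)/\sqrt{2f(\phi)+2A}$ for a bulk potential $f$ and constant $A$ with $2f+2A>0$, and $\bar g^{n+\frac12}_{i,j}$ denotes $g$ evaluated at $\tfrac32\tilde\phi^n_{i,j}-\tfrac12\tilde\phi^{n-1}_{i,j}$ ($n\ge1$) or at $\tilde\phi^0_{i,j}$ ($n=0$). Notation $u^{n+\frac12}=\tfrac12(u^{n+1}+u^n)$. For a cell-centered $w$ define $\mathcal B(w)_{i,j}=\tfrac12\big[|D_x\psi|_{i-\frac12,j}(A_xw)_{i-\frac12,j}+|D_x\psi|_{i+\frac12,j}(A_xw)_{i+\frac12,j}+|D_y\psi|_{i,j-\frac12}(A_yw)_{i,j-\frac12}+|D_y\psi|_{i,j+\frac12}(A_yw)_{i,j+\frac12}\big]$, and define the boundary energy density $\mathcal B(\cdot)^{\sharp}_{i,j}=\tfrac12\sum_{e}|D\psi|_e\big[\tfrac12\alpha\big((A\tilde\phi^n)_e-(Ah_1)_e\big)^2-(Ah_2)_e(A\tilde\phi^n)_e\big]$, where $e$ runs over the four faces $(i\pm\frac12,j)$, $(i,j\pm\frac12)$ of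 cell $(i,j)$, with $|D\psi|_e$, $A$ meaning $|D_x\psi|$, $A_x$ on $x$-faces and $|D_y\psi|$, $A_y$ on $y$-faces. The scheme: given $\tilde\phi^n,q^n$, find $\tilde\phi^{n+1},q^{n+1},\mu_*^{n+\frac12}$ with, at every cell $(i,j)$, (1) $\frac{\tilde\phi^{n+1}-\tilde\phi^n}{\Delta t}=\chi\,D_h(\psi\bar M^{n+\frac12},\chi\mu_*^{n+\frac12})-\chi\,\mathcal B(h_3)$; (2) $\mu_*^{n+\frac12}=\psi\,\bar g^{n+\frac12}q^{n+\frac12}-K\,D_h(\psi,\tilde\phi^{n+\frac12})+\mathcal B\big(\alpha(\tilde\phi^{n+\frac12}-h_1)-h_2+\Gamma^{-1}\frac{\tilde\phi^{n+1}-\tilde\phi^n}{\Delta t}\big)$; (3) $q^{n+1}-q^n=\bar g^{n+\frac12}(\tilde\phi^{n+1}-\tilde\phi^n)$. Boundary conditions (discrete homogeneous Neumann): the ghost values of $\tilde\phi^{n},\tilde\phi^{n+1}$, of $\psi$ (hence of $\chi$), and of $\mu_*^{n+\frac12}$ equal the adjacent interior values, e.g. $u_{0,j}=u_{1,j}$, $u_{N_x+1,j}=u_{N_x,j}$, $u_{i,0}=u_{i,1}$, $u_{i,N_y+1}=u_{i,N_y}$. *)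

From HB Require Import structures.
From mathcomp Require Import all_boot all_order all_algebra.
From mathcomp Require Import all_classical all_reals all_analysis.
Set Implicit Arguments. Unset Strict Implicit. Unset Printing Implicit Defensive.
Import Order.TTheory GRing.Theory Num.Theory.
Local Open Scope ring_scope.

(* Grid functions: u i j with i = 0..Nx+1, j = 0..Ny+1 (0 and N+1 are ghosts).
   Face functions: the x-face (i+1/2, j) is stored at index (i, j),
   the y-face (i, j+1/2) is stored at index (i, j). *)
Definition grid (R : realType) := nat -> nat -> R.

Section Grid.
Context {R : realType}.
Implicit Types (u w a psi : grid R) (dx dy : R).

Definition Ax u : grid R := fun i j => (u i.+1 j + u i j) / 2.
Definition Ay u : grid R := fun i j => (u i j.+1 + u i j) / 2.
Definition Dx dx u : grid R := fun i j => (u i.+1 j - u i j) / dx.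
Definition Dy dy u : grid R := fun i j => (u i j.+1 - u i j) / dy.
(* divergence-type differences of face functions, evaluated at cell (i,j), i,j >= 1 *)
Definition Dxf dx (w : grid R) : grid R := fun i j => (w i j - w i.-1 j) / dx.
Definition Dyf dy (w : grid R) : grid R := fun i j => (w i j - w i j.-1) / dy.

Definition Dh dx dy a u : grid R := fun i j =>
  Dxf dx (fun k l => Ax a k l * Dx dx u k l) i j
  + Dyf dy (fun k l => Ay a k l * Dy dy u k l) i j.

Definition Bop dx dy psi w : grid R := fun i j =>
  (`|Dx dx psi i.-1 j| * Ax w i.-1 j + `|Dx dx psi i j| * Ax w i j
   + `|Dy dy psi i j.-1| * Ay w i j.-1 + `|Dy dy psi i j| * Ay w i j) / 2.

Definition bdens (alpha : R) (Aphi Ah1 Ah2 : R) : R :=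
  alpha / 2 * (Aphi - Ah1) ^+ 2 - Ah2 * Aphi.
Definition Bsharp dx dy psi (alpha : R) h1 h2 phi : grid R := fun i j =>
  (`|Dx dx psi i.-1 j| * bdens alpha (Ax phi i.-1 j) (Ax h1 i.-1 j) (Ax h2 i.-1 j)
   + `|Dx dx psi i j| * bdens alpha (Ax phi i j) (Ax h1 i j) (Ax h2 i j)
   + `|Dy dy psi i j.-1| * bdens alpha (Ay phi i j.-1) (Ay h1 i j.-1) (Ay h2 i j.-1)
   + `|Dy dy psi i j| * bdens alpha (Ay phi i j) (Ay h1 i j) (Ay h2 i j)) / 2.

Definition energy (Nx Ny : nat) dx dy psi (K alpha : R) h1 h2 (phi q : grid R) : R :=
  dx * dy * \sum_(1 <= i < Nx.+1) \sum_(1 <= j < Ny.+1)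
    (psi i j * (q i j) ^+ 2 / 2
     + K / 2 * (Ax psi i j * (Dx dx phi i j) ^+ 2 + Ay psi i j * (Dy dy phi i j) ^+ 2)
     + Bsharp dx dy psi alpha h1 h2 phi i j).

Definition gfun (f : R -> R) (A : R) (x : R) : R :=
  derive1 f x / Num.sqrt (2 * f x + 2 * A).

Definition gbar (f : R -> R) (A : R) (phi : nat -> grid R) (n : nat) : grid R :=
  fun i j => match n with
             | 0 => gfun f A (phi 0%N i j)
             | m.+1 => gfun f A (3 / 2 * phi m.+1 i j - 1 / 2 * phi m i j)
             end.

Definition neumann (Nx Ny : nat) (u : grid R) : Prop :=
  (forall j, u 0%N j = u 1%N j) /\ (forall j, u Nx.+1 j = u Nx j) /\
  (forall i, u i 0%N = u i 1%N) /\ (forall i, u i Ny.+1 = u i Ny).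

End Grid.

(* The energy method, carried out exactly on the grid.  Update (3) is a discrete chain
   rule for q, and the energy is quadratic in phi, so the energy increment is dt times
   the pairing of dphi with the first three terms of the chemical potential (2): for the
   gradient part this uses summation by parts for D_h, for the boundary part a
   symmetrisation of B, both exact thanks to the Neumann ghost values.  Pairing (2) with
   dphi therefore leaves only the Gamma^-1 relaxation term, while pairing (1) with
   chi mu and summing by parts once more expresses the same quantity as minus the
   mobility dissipation minus the h3 source. *)

From HB Require Import structures.
From mathcomp Require Import all_boot all_order all_algebra.
From mathcomp Require Import all_classical all_reals all_analysis.
From mathcomp Require Import ring.
Import Order.TTheory GRing.Theory Num.Theory.
Set Implicit Arguments.
Unset Strict Implicit.
Unset Printing Implicit Defensive.
Local Open Scope ring_scope.

Section CellSums.
Variables (R : realType) (Nx Ny : nat).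

Definition csum (u : grid R) : R :=
  \sum_(1 <= i < Nx.+1) \sum_(1 <= j < Ny.+1) u i j.

Lemma eq_csum (u v : grid R) :
  (forall i j, (1 <= i <= Nx)%N -> (1 <= j <= Ny)%N -> u i j = v i j) ->
  csum u = csum v.
Proof. by move=> uv; apply: eq_big_nat => i ? ; apply: eq_big_nat => j ?; apply: uv. Qed.

Lemma csumD (u v : grid R) : csum (fun i j => u i j + v i j) = csum u + csum v.
Proof. by rewrite /csum -big_split; apply: eq_bigr => i _; apply: big_split. Qed.

Lemma csumB (u v : grid R) : csum (fun i j => u i j - v i j) = csum u - csum v.
Proof. by rewrite /csum -sumrB; apply: eq_bigr => i _; apply: sumrB. Qed.

Lemma csumZ (c : R) (u : grid R) : csum (fun i j => c * u i j) = c * csum u.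
Proof. by rewrite /csum mulr_sumr; apply: eq_bigr => i _; rewrite mulr_sumr. Qed.

Lemma csum_ge0 (u : grid R) : (forall i j, 0 <= u i j) -> 0 <= csum u.
Proof. by move=> u_ge0; do 2![apply: sumr_ge0 => ? _]. Qed.

Lemma sum_backward_diff (N : nat) (U : nat -> R) :
  \sum_(1 <= i < N.+1) (U i - U i.-1) = U N - U 0%N.
Proof. by rewrite big_add1 telescope_sumr. Qed.

Lemma csum_div_eq0 (Fx Fy : grid R) :
  (forall j, Fx 0%N j = 0) -> (forall j, Fx Nx j = 0) ->
  (forall i, Fy i 0%N = 0) -> (forall i, Fy i Ny = 0) ->
  csum (fun i j => (Fx i j - Fx i.-1 j) + (Fy i j - Fy i j.-1)) = 0.
Proof.
move=> Fx0 FxN Fy0 FyN; rewrite csumD /csum exchange_big /=.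
rewrite !big1 ?addr0 // => i _; by rewrite sum_backward_diff ?Fx0 ?FxN ?Fy0 ?FyN subrr.
Qed.

End CellSums.

Section DiscreteCalculus.
Variables (R : realType) (Nx Ny : nat) (dx dy : R).

Lemma neumann_map2 (F : R -> R -> R) (u v : grid R) :
  neumann Nx Ny u -> neumann Nx Ny v -> neumann Nx Ny (fun i j => F (u i j) (v i j)).
Proof.
by move=> [u0 [uN [u0' uN']]] [v0 [vN [v0' vN']]]; split; [|split; [|split]] => k;
  rewrite ?u0 ?uN ?u0' ?uN' ?v0 ?vN ?v0' ?vN'.
Qed.

Lemma neumann_boundary_diff (u : grid R) : neumann Nx Ny u ->
  (forall j, Dx dx u 0%N j = 0) /\ (forall j, Dx dx u Nx j = 0) /\
  (forall i, Dy dy u i 0%N = 0) /\ (forall i, Dy dy u i Ny = 0).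
Proof.
by move=> [u0 [uN [u0' uN']]]; rewrite /Dx /Dy; split; [|split; [|split]] => k;
  rewrite ?u0 ?uN ?u0' ?uN' subrr mul0r.
Qed.

Lemma csum_Dh_mul (a u v : grid R) : neumann Nx Ny u ->
  csum Nx Ny (fun i j => Dh dx dy a u i j * v i j) =
  - csum Nx Ny (fun i j => Ax a i j * Dx dx u i j * Dx dx v i j
                         + Ay a i j * Dy dy u i j * Dy dy v i j).
Proof.
move=> /neumann_boundary_diff[Du0 [DuN [Du0' DuN']]].
apply/eqP; rewrite -subr_eq0 opprK -csumD.
pose Fx i j := Ax a i j * Dx dx u i j * v i.+1 j / dx.
pose Fy i j := Ay a i j * Dy dy u i j * v i j.+1 / dy.
rewrite -(@csum_div_eq0 _ Nx Ny Fx Fy).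
- apply/eqP/eq_csum => -[|i] [|j] // _ _.
  by rewrite /Fx /Fy /Dh /Dxf /Dyf /Dx /Dy /=; ring.
all: by move=> k; rewrite /Fx /Fy ?Du0 ?DuN ?Du0' ?DuN' !mulr0 !mul0r.
Qed.

Definition Bform (psi w v : grid R) : grid R := fun i j =>
  (`|Dx dx psi i.-1 j| * (Ax w i.-1 j * Ax v i.-1 j) + `|Dx dx psi i j| * (Ax w i j * Ax v i j)
   + `|Dy dy psi i j.-1| * (Ay w i j.-1 * Ay v i j.-1)
   + `|Dy dy psi i j| * (Ay w i j * Ay v i j)) / 2.

Lemma csum_Bop_mul (psi w v : grid R) : neumann Nx Ny psi ->
  csum Nx Ny (fun i j => Bop dx dy psi w i j * v i j) = csum Nx Ny (Bform psi w v).
Proof.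
move=> /neumann_boundary_diff[Dpsi0 [DpsiN [Dpsi0' DpsiN']]].
apply/eqP; rewrite -subr_eq0 -csumB.
pose Fx i j := - `|Dx dx psi i j| * Ax w i j * (v i.+1 j - v i j) / 4.
pose Fy i j := - `|Dy dy psi i j| * Ay w i j * (v i j.+1 - v i j) / 4.
rewrite -(@csum_div_eq0 _ Nx Ny Fx Fy).
- apply/eqP/eq_csum => -[|i] [|j] // _ _.
  by rewrite /Fx /Fy /Bop /Bform /Ax /Ay /=; field.
all: by move=> k; rewrite /Fx /Fy ?Dpsi0 ?DpsiN ?Dpsi0' ?DpsiN' normr0 oppr0 !mul0r.
Qed.

Lemma face_sums_csum (a u : grid R) : neumann Nx Ny u ->
  \sum_(0 <= i < Nx.+1) \sum_(1 <= j < Ny.+1) Ax a i j * (Dx dx u i j) ^+ 2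
  + \sum_(1 <= i < Nx.+1) \sum_(0 <= j < Ny.+1) Ay a i j * (Dy dy u i j) ^+ 2 =
  csum Nx Ny (fun i j => Ax a i j * Dx dx u i j * Dx dx u i j
                       + Ay a i j * Dy dy u i j * Dy dy u i j).
Proof.
move=> /neumann_boundary_diff[Du0 [_ [Du0' _]]].
rewrite csumD /csum big_ltn // big1 ?add0r => [|j _]; last by rewrite Du0 expr2 !mulr0.
congr (_ + _); apply: eq_bigr => i _; last rewrite big_ltn // Du0' expr2 !mulr0 add0r.
all: by apply: eq_bigr => j _; rewrite expr2 mulrA.
Qed.

End DiscreteCalculus.

Section EnergyLaw.
Variables (R : realType) (Nx Ny : nat) (dx dy : R) (psi : grid R).
Variables (K alpha Gamma dt : R) (h1 h2 h3 Mbar g mu phi0 phi1 q0 q1 : grid R).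

Let chi : grid R := fun i j => 1 / psi i j.
Let dphi : grid R := fun i j => (phi1 i j - phi0 i j) / dt.
Let phih : grid R := fun i j => (phi1 i j + phi0 i j) / 2.
Let qh : grid R := fun i j => (q1 i j + q0 i j) / 2.
Let psiM : grid R := fun i j => psi i j * Mbar i j.
Let chimu : grid R := fun i j => chi i j * mu i j.
Let wB : grid R := fun i j => alpha * (phih i j - h1 i j) - h2 i j.

Hypothesis dt_neq0 : dt != 0.
Hypothesis scheme_phi : forall i j, (1 <= i <= Nx)%N -> (1 <= j <= Ny)%N ->
  dphi i j = chi i j * Dh dx dy psiM chimu i j - chi i j * Bop dx dy psi h3 i j.
Hypothesis scheme_mu : forall i j, (1 <= i <= Nx)%N -> (1 <= j <= Ny)%N ->
  mu i j = psi i j * g i j * qh i j - K * Dh dx dy psi phih i j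
           + Bop dx dy psi (fun k l => wB k l + Gamma^-1 * dphi k l) i j.
Hypothesis scheme_q : forall i j, (1 <= i <= Nx)%N -> (1 <= j <= Ny)%N ->
  q1 i j - q0 i j = g i j * (phi1 i j - phi0 i j).
Hypotheses (neumann_phi0 : neumann Nx Ny phi0) (neumann_phi1 : neumann Nx Ny phi1).
Hypotheses (neumann_psi : neumann Nx Ny psi) (neumann_mu : neumann Nx Ny mu).

Let energy_at := energy Nx Ny dx dy psi K alpha h1 h2.

Lemma energy_increment_cells :
  energy_at phi1 q1 - energy_at phi0 q0 = dx * dy * dt * csum Nx Ny (fun i j =>
    psi i j * g i j * qh i j * dphi i j
    + K * (Ax psi i j * Dx dx phih i j * Dx dx dphi i j
           + Ay psi i j * Dy dy phih i j * Dy dy dphi i j)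
    + Bform dx dy psi wB dphi i j).
Proof.
rewrite /energy_at /energy -mulrBr -csumB -mulrA -csumZ; congr (_ * _).
apply: eq_csum => i j Hi Hj.
have q1E : q1 i j = q0 i j + g i j * (phi1 i j - phi0 i j) by rewrite -scheme_q //; ring.
rewrite /Bsharp /Bform /bdens /wB /qh /dphi /phih /Ax /Ay /Dx /Dy q1E.
(* hiding dx^-1 and dy^-1 keeps field from asking for dx != 0 and dy != 0 *)
set rx := dx^-1; set ry := dy^-1.
by field.
Qed.

Lemma energy_increment :
  energy_at phi1 q1 - energy_at phi0 q0 = dx * dy * dt *
    (csum Nx Ny (fun i j => psi i j * g i j * qh i j * dphi i j)
     - K * csum Nx Ny (fun i j => Dh dx dy psi phih i j * dphi i j)
     + csum Nx Ny (fun i j => Bop dx dy psi wB i j * dphi i j)).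
Proof.
have neumann_phih : neumann Nx Ny phih :=
  neumann_map2 (fun a b => (a + b) / 2) neumann_phi1 neumann_phi0.
rewrite energy_increment_cells !csumD csumZ csum_Dh_mul // csum_Bop_mul //.
by rewrite mulrN opprK.
Qed.

Lemma csum_mu_dphi_potential :
  csum Nx Ny (fun i j => mu i j * dphi i j) =
    csum Nx Ny (fun i j => psi i j * g i j * qh i j * dphi i j)
    - K * csum Nx Ny (fun i j => Dh dx dy psi phih i j * dphi i j)
    + csum Nx Ny (fun i j => Bop dx dy psi wB i j * dphi i j)
    + csum Nx Ny (fun i j => Bop dx dy psi (fun k l => Gamma^-1 * dphi k l) i j * dphi i j).
Proof.
rewrite -csumZ -csumB -!csumD; apply: eq_csum => i j Hi Hj.
by rewrite scheme_mu // /Bop /Ax /Ay; ring.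
Qed.

Lemma csum_mu_dphi_mobility :
  csum Nx Ny (fun i j => mu i j * dphi i j) =
    - csum Nx Ny (fun i j => Ax psiM i j * Dx dx chimu i j * Dx dx chimu i j
                           + Ay psiM i j * Dy dy chimu i j * Dy dy chimu i j)
    - csum Nx Ny (fun i j => mu i j * chi i j * Bop dx dy psi h3 i j).
Proof.
have neumann_chimu : neumann Nx Ny chimu :=
  neumann_map2 (fun a b => 1 / a * b) neumann_psi neumann_mu.
rewrite -csum_Dh_mul // -csumB; apply: eq_csum => i j Hi Hj.
by rewrite scheme_phi // /chimu; ring.
Qed.

Lemma csum_relaxation :
  csum Nx Ny (fun i j => Bop dx dy psi (fun k l => Gamma^-1 * dphi k l) i j * dphi i j) =
  csum Nx Ny (fun i j => Gamma^-1 / 2 *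
      (`|Dx dx psi i.-1 j| * (Ax dphi i.-1 j) ^+ 2 + `|Dx dx psi i j| * (Ax dphi i j) ^+ 2
       + `|Dy dy psi i j.-1| * (Ay dphi i j.-1) ^+ 2 + `|Dy dy psi i j| * (Ay dphi i j) ^+ 2)).
Proof.
rewrite csum_Bop_mul //; apply: eq_csum => i j _ _.
by rewrite /Bform /Ax /Ay; ring.
Qed.

Lemma energy_law :
  (energy_at phi1 q1 - energy_at phi0 q0) / dt =
     - (dx * dy) * (\sum_(0 <= i < Nx.+1) \sum_(1 <= j < Ny.+1)
                       Ax psiM i j * (Dx dx chimu i j) ^+ 2
                    + \sum_(1 <= i < Nx.+1) \sum_(0 <= j < Ny.+1)
                       Ay psiM i j * (Dy dy chimu i j) ^+ 2)
     - (dx * dy) * csum Nx Ny (fun i j => Gamma^-1 / 2 *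
         (`|Dx dx psi i.-1 j| * (Ax dphi i.-1 j) ^+ 2 + `|Dx dx psi i j| * (Ax dphi i j) ^+ 2
          + `|Dy dy psi i j.-1| * (Ay dphi i j.-1) ^+ 2 + `|Dy dy psi i j| * (Ay dphi i j) ^+ 2))
     - (dx * dy) * csum Nx Ny (fun i j => mu i j * chi i j * Bop dx dy psi h3 i j).
Proof.
have neumann_chimu : neumann Nx Ny chimu :=
  neumann_map2 (fun a b => 1 / a * b) neumann_psi neumann_mu.
rewrite energy_increment face_sums_csum // -csum_relaxation.
have := csum_mu_dphi_potential; rewrite csum_mu_dphi_mobility => /(canLR (addrK _)) <-.
by field.
Qed.

Lemma energy_decay : 0 <= dt -> 0 <= dx -> 0 <= dy -> 0 <= Gamma ->
  (forall i j, 0 <= psi i j) -> (forall i j, 0 <= Mbar i j) -> (forall i j, h3 i j = 0) ->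
  energy_at phi1 q1 <= energy_at phi0 q0.
Proof.
move=> dt_ge0 dx_ge0 dy_ge0 Gamma_ge0 psi_ge0 Mbar_ge0 h3_eq0.
have Ax_psiM_ge0 i j : 0 <= Ax psiM i j by rewrite /Ax divr_ge0 ?addr_ge0 ?mulr_ge0.
have Ay_psiM_ge0 i j : 0 <= Ay psiM i j by rewrite /Ay divr_ge0 ?addr_ge0 ?mulr_ge0.
have source_eq0 : csum Nx Ny (fun i j => mu i j * chi i j * Bop dx dy psi h3 i j) = 0.
  by rewrite /csum big1 // => i _; rewrite big1 // => j _; rewrite /Bop /Ax /Ay !h3_eq0; ring.
rewrite -subr_le0 -(divfK dt_neq0 (_ - _)) energy_law source_eq0.
apply: mulr_le0_ge0 => //; rewrite mulr0 subr0 !mulNr -opprD oppr_le0.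
rewrite -mulrDr mulr_ge0 ?mulr_ge0 ?addr_ge0 //.
1,2: by do 2![apply: sumr_ge0 => ? _]; rewrite mulr_ge0 ?sqr_ge0.
apply: csum_ge0 => i j; rewrite mulr_ge0 ?divr_ge0 ?invr_ge0 //.
by rewrite !addr_ge0 // mulr_ge0 ?sqr_ge0.
Qed.

End EnergyLaw.

Theorem theorem2 (R : realType) (Nx Ny : nat) (Lx Ly : R)
  (psi : grid R) (K alpha Gamma dt Acst : R) (f : R -> R)
  (h1 h2 h3 : grid R) (Mbar : grid R)
  (phi q : nat -> grid R) (mu : grid R) (n : nat) :
  (0 < Nx)%N -> (0 < Ny)%N -> 0 < Lx -> 0 < Ly ->
  let dx := Lx / Nx%:R in let dy := Ly / Ny%:R in
  let chi : grid R := fun i j => 1 / psi i j in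
  (forall i j, 0 < psi i j) ->
  0 < K -> 0 <= alpha -> 0 < Gamma -> 0 < dt ->
  (forall x, derivable f x 1) -> (forall x, 0 < 2 * f x + 2 * Acst) ->
  (forall i j, 0 < Mbar i j) ->
  let gb := gbar f Acst phi n in
  let dphi : grid R := fun i j => (phi n.+1 i j - phi n i j) / dt in
  let phih : grid R := fun i j => (phi n.+1 i j + phi n i j) / 2 in
  let qh : grid R := fun i j => (q n.+1 i j + q n i j) / 2 in
  let psiM : grid R := fun i j => psi i j * Mbar i j in
  let chimu : grid R := fun i j => chi i j * mu i j in
  (* scheme (1)-(3) at every cell *)
  (forall i j, (1 <= i <= Nx)%N -> (1 <= j <= Ny)%N ->
     dphi i j = chi i j * Dh dx dy psiM chimu i j - chi i j * Bop dx dy psi h3 i j) ->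
  (forall i j, (1 <= i <= Nx)%N -> (1 <= j <= Ny)%N ->
     mu i j = psi i j * gb i j * qh i j - K * Dh dx dy psi phih i j
              + Bop dx dy psi (fun k l => alpha * (phih k l - h1 k l) - h2 k l
                                          + Gamma^-1 * dphi k l) i j) ->
  (forall i j, (1 <= i <= Nx)%N -> (1 <= j <= Ny)%N ->
     q n.+1 i j - q n i j = gb i j * (phi n.+1 i j - phi n i j)) ->
  (* discrete homogeneous Neumann boundary conditions *)
  neumann Nx Ny (phi n) -> neumann Nx Ny (phi n.+1) -> neumann Nx Ny psi ->
  neumann Nx Ny mu ->
  let F m := energy Nx Ny dx dy psi K alpha h1 h2 (phi m) (q m) in
  ((F n.+1 - F n) / dt =
     - (dx * dy) * (\sum_(0 <= i < Nx.+1) \sum_(1 <= j < Ny.+1)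
                       Ax psiM i j * (Dx dx chimu i j) ^+ 2
                    + \sum_(1 <= i < Nx.+1) \sum_(0 <= j < Ny.+1)
                       Ay psiM i j * (Dy dy chimu i j) ^+ 2)
     - (dx * dy) * (\sum_(1 <= i < Nx.+1) \sum_(1 <= j < Ny.+1)
          (Gamma^-1 / 2 *
            (`|Dx dx psi i.-1 j| * (Ax dphi i.-1 j) ^+ 2
             + `|Dx dx psi i j| * (Ax dphi i j) ^+ 2
             + `|Dy dy psi i j.-1| * (Ay dphi i j.-1) ^+ 2
             + `|Dy dy psi i j| * (Ay dphi i j) ^+ 2)))
     - (dx * dy) * (\sum_(1 <= i < Nx.+1) \sum_(1 <= j < Ny.+1)
          mu i j * chi i j * Bop dx dy psi h3 i j))
  /\ ((forall i j, h3 i j = 0) -> F n.+1 <= F n).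
Proof.
move=> Nx_gt0 Ny_gt0 Lx_gt0 Ly_gt0 dx dy chi psi_gt0 _ _ Gamma_gt0 dt_gt0 _ _ Mbar_gt0
  gb dphi phih qh psiM chimu scheme_phi scheme_mu scheme_q
  neumann_phi0 neumann_phi1 neumann_psi neumann_mu F.
(* The law holds for any values of gbar, and decay needs no sign on K or alpha. *)
have dt_neq0 : dt != 0 by rewrite gt_eqF.
have dx_ge0 : 0 <= dx by rewrite divr_ge0 ?ltW // ltr0n.
have dy_ge0 : 0 <= dy by rewrite divr_ge0 ?ltW // ltr0n.
split=> [|h3_eq0].
  exact: (energy_law dt_neq0 scheme_phi scheme_mu scheme_q
            neumann_phi0 neumann_phi1 neumann_psi neumann_mu).
exact: (energy_decay dt_neq0 scheme_phi scheme_mu scheme_q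
          neumann_phi0 neumann_phi1 neumann_psi neumann_mu (ltW dt_gt0) dx_ge0 dy_ge0
          (ltW Gamma_gt0) (fun i j => ltW (psi_gt0 i j)) (fun i j => ltW (Mbar_gt0 i j)) h3_eq0).
Qed.
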